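(* Let $\mathcal{M}=(S,P,E,s_{init},L)$ be a CTMC, $\varepsilon,\delta\geq0$, let $R$ be a transitive $(\varepsilon,\delta)$-bisimulation on $\mathcal{M}$ and let $q\geq\max_{s\in S}E(s)$. Then the partition $S/R$ of $S$ into equivalence classes of $R$ is a $q\cdot(e^{\delta}(1+\varepsilon)-1)$-quasi-lumpability.
   Context: A CTMC $(S,P,E,s_{init},L)$: finite $S$, $P\colon S\to\mathrm{Distr}(S)$ (with $P(s,A)=\sum_{a\in A}P(s,a)$), $E\colon S\to\mathbb{R}_{>0}$, initial state, labeling $L\colon S\to2^{AP}$. For $R\subseteq S\times S$, $A\subseteq S$: $R(A)=\{t\mid\exists a\in A:(a,t)\in R\}$. A reflexive symmetric $R$ is an $(\varepsilon,\delta)$-bisimulation if for all $(s,s')\in R$: $L(s)=L(s')$, $|\ln E(s)-\ln E(s')|\leq\delta$, and $P(s,A)\leq P(s',R(A))+\varepsilon$ for all $A\subseteq S$. For $\tau\geq0$, a partition $\Omega=\{\Omega_1,\dots,\Omega_m\}$ of $S$ is a $\tau$-quasi-lumpability if for all $1\leq i,j\leq m$ and all $s,s'\in\Omega_i$: $|P(s,\Omega_j)\cdot E(s)-P(s',\Omega_j)\cdot E(s')|\leq\tau$. *)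

From HB Require Import structures.
From mathcomp Require Import all_boot all_order all_algebra.
From mathcomp Require Import reals sequences exp.
Set Implicit Arguments. Unset Strict Implicit. Unset Printing Implicit Defensive.
Import Order.TTheory GRing.Theory Num.Theory.
Local Open Scope ring_scope.

Section CTMC.
Variables (R : realType) (S : finType) (AP : Type).

Definition PA (P : S -> S -> R) (s : S) (A : {set S}) : R := \sum_(a in A) P s a.

Definition is_ctmc (P : S -> S -> R) (E : S -> R) : Prop :=
  (forall s t, 0 <= P s t) /\ (forall s, \sum_(t : S) P s t = 1) /\
  (forall s, 0 < E s).

Definition rel_image (Rl : rel S) (A : {set S}) : {set S} :=
  [set t | [exists a in A, Rl a t]].

Definition eps_delta_bisim (P : S -> S -> R) (E : S -> R) (L : S -> AP -> Prop)
  (eps delta : R) (Rl : rel S) : Prop :=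
  reflexive Rl /\ symmetric Rl /\
  forall s s', Rl s s' ->
    [/\ L s = L s',
        `|ln (E s) - ln (E s')| <= delta &
        forall A : {set S}, PA P s A <= PA P s' (rel_image Rl A) + eps].

Definition quasi_lumpability (P : S -> S -> R) (E : S -> R) (tau : R)
  (Omega : {set {set S}}) : Prop :=
  partition Omega [set: S] /\
  forall Oi Oj, Oi \in Omega -> Oj \in Omega ->
    forall s s', s \in Oi -> s' \in Oi ->
      `|PA P s Oj * E s - PA P s' Oj * E s'| <= tau.

End CTMC.

(* A transitive (eps, delta)-bisimulation R is an equivalence relation, and its classes are
   R-closed: R(C) = C.  For related s, s' and a class C, the bisimulation condition therefore
   gives P(s, C) <= P(s', C) + eps, while the rate condition gives E(s) <= e^delta E(s').
   Since both probabilities lie in [0, 1] and E(s) <= q, an elementary estimate bounds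
   P(s, C) E(s) - P(s', C) E(s') by q (e^delta (1 + eps) - 1); by symmetry this bounds the
   absolute difference. *)
From HB Require Import structures.
From mathcomp Require Import all_boot all_order all_algebra.
From mathcomp Require Import reals sequences exp.
From mathcomp Require Import lra.
Import Order.TTheory GRing.Theory Num.Theory.
Local Open Scope ring_scope.

Lemma weighted_diff_le (R : realFieldType) (p p' a b x eps : R) :
  0 <= p' <= 1 -> p <= p' + eps -> 0 <= eps -> 0 <= a -> 1 <= x -> a <= x * b ->
  p * a - p' * b <= a * (x * (1 + eps) - 1).
Proof.
move=> /andP[p'0 p'1] pp' eps0 a0 x1 ab.
have [D_le0|D_gt0] := lerP (p * a - p' * b) 0.
  by apply: le_trans D_le0 _; apply: mulr_ge0 => //; nra.
have xD : x * (p * a - p' * b) <= x * p * a - p' * a.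
  have slack : 0 <= x * b - a by rewrite subr_ge0.
  by have := mulr_ge0 p'0 slack; nra.
(* [a * (x * (1 + eps) - 1) - (x * p * a - p' * a)] is exactly this slack. *)
have gap : 0 <= a * (x * (p' + eps - p) + (1 - p') * (x - 1)).
  by apply: mulr_ge0 => //; apply: addr_ge0; apply: mulr_ge0; lra.
nra.
Qed.

Lemma le_expR_mul_of_ln_le (R : realType) (a b d : R) :
  0 < a -> 0 < b -> ln a - ln b <= d -> a <= expR d * b.
Proof.
move=> a0 b0 hd.
rewrite -[a]lnK ?posrE // -[b in _ <= _ * b]lnK ?posrE // -expRD ler_expR.
lra.
Qed.

Section Lumpability.
Context {R : realType} {S : finType}.

Lemma PA_ge0 (P : S -> S -> R) s A : (forall t, 0 <= P s t) -> 0 <= PA P s A.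
Proof. by move=> P0; apply: sumr_ge0. Qed.

Lemma PA_le1 (P : S -> S -> R) s A :
  (forall t, 0 <= P s t) -> \sum_t P s t = 1 -> PA P s A <= 1.
Proof.
move=> P0 <-; rewrite [leRHS](bigID (mem A)) /= lerDl.
exact: sumr_ge0.
Qed.

Context {Rl : rel S}.
Hypotheses (Rl_refl : reflexive Rl) (Rl_sym : symmetric Rl) (Rl_trans : transitive Rl).

Lemma equivalence_partition_setT : partition (equivalence_partition Rl [set: S]) [set: S].
Proof.
apply: equivalence_partitionP; apply: in3W; apply/equivalence_relP.
by split; [exact: Rl_refl | exact: sym_left_transitive].
Qed.

Lemma rel_image_equivalence_class B :
  B \in equivalence_partition Rl [set: S] -> rel_image Rl B = B.
Proof.
case/imsetP=> y _ ->; apply/setP=> t; rewrite !inE /=.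
apply/existsP/idP => [[a /andP[]]|Ryt]; first by rewrite !inE => Rya; apply: Rl_trans.
by exists t; rewrite !inE Ryt Rl_refl.
Qed.

Lemma equivalence_class_rel {B s s'} :
  B \in equivalence_partition Rl [set: S] -> s \in B -> s' \in B -> Rl s s'.
Proof.
by case/imsetP=> x _ ->; rewrite !inE /= => Rxs Rxs'; apply: Rl_trans Rxs'; rewrite Rl_sym.
Qed.

Context {AP : Type} {P : S -> S -> R} {E : S -> R} {L : S -> AP -> Prop}.
Context {eps delta q : R}.
Hypotheses (ctmc : is_ctmc P E) (eps0 : 0 <= eps) (E_le_q : forall s, E s <= q).
Hypothesis bisim : eps_delta_bisim P E L eps delta Rl.

Lemma bisim_weighted_diff_le B :
  rel_image Rl B = B -> forall s s', Rl s s' ->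
  PA P s B * E s - PA P s' B * E s' <= q * (expR delta * (1 + eps) - 1).
Proof.
have [P0 [Psum E0]] := ctmc; have [_ [_ bisim_cond]] := bisim.
move=> closedB s s' Rss'; have [_ ln_dist mass] := bisim_cond s s' Rss'.
have delta0 : 0 <= delta by apply: le_trans ln_dist.
have exp_ge1 : 1 <= expR delta by have := expR_ge1Dx delta; lra.
have rate : E s <= expR delta * E s'.
  by apply: le_expR_mul_of_ln_le => //; move: ln_dist; rewrite ler_norml => /andP[].
apply: le_trans (ler_wpM2r _ (E_le_q s)).
  apply: weighted_diff_le => //.
  - by rewrite PA_ge0 ?PA_le1.
  - by have := mass B; rewrite closedB.
  - exact: ltW (E0 s).
by rewrite subr_ge0 -[leLHS]mul1r ler_pM // lerDl.
Qed.

End Lumpability.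

Theorem proposition1 (R : realType) (S : finType) (AP : Type)
  (P : S -> S -> R) (E : S -> R) (s_init : S) (L : S -> AP -> Prop)
  (eps delta : R) (Rl : rel S) (q : R) :
  is_ctmc P E -> 0 <= eps -> 0 <= delta ->
  eps_delta_bisim P E L eps delta Rl -> transitive Rl ->
  (forall s, E s <= q) ->
  quasi_lumpability P E (q * (expR delta * (1 + eps) - 1))
    (equivalence_partition Rl [set: S]).
Proof.
move=> ctmc eps0 _ bisim Rl_trans E_le_q.
have [Rl_refl [Rl_sym _]] := bisim.
split; first exact: equivalence_partition_setT.
move=> Oi Oj Oi_class Oj_class s s' Oi_s Oi_s'.
have closedOj : rel_image Rl Oj = Oj by exact: rel_image_equivalence_class.
have Rss' := equivalence_class_rel Rl_sym Rl_trans Oi_class Oi_s Oi_s'.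
have bound := bisim_weighted_diff_le ctmc eps0 E_le_q bisim Oj closedOj.
by rewrite ler_norml lerNl opprB !bound // Rl_sym.
Qed.
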